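(* Let $\Gamma\subset U_+$ be a non-commutative, torsion-free complex Kleinian group and let $\Gamma_p$ be the subgroup of $\Gamma$ generated by all parabolic elements of $\Gamma$. Suppose $\Gamma_p$ is conjugate in $\mathrm{PSL}(3,\mathbb{C})$ to a group $$\Gamma^\ast_W=\{g_{x,y} : (x,y)\in W\},\qquad g_{x,y}=\begin{bmatrix}1&x&y\\0&1&0\\0&0&1\end{bmatrix},$$ for some discrete additive subgroup $W\subset\mathbb{C}^2$ with $\mathrm{rank}(W)\le 2$. Then $\Gamma_p$ is conjugate to one of the following groups: (i) $\Gamma_1=\langle g_{1,0},g_{0,1}\rangle$; (ii) $\Gamma_2=\langle g_{0,1},g_{0,y}\rangle$ with $y\notin\mathbb{R}$; (iii) $\Gamma_3=\langle g_{1,0},g_{x,0}\rangle$ with $x\notin\mathbb{R}$; (iv) $\Gamma_4=\langle g_{1,0}\rangle$; (v) $\Gamma_5=\langle g_{0,1}\rangle$.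
   Context: $U_+\subset\mathrm{PSL}(3,\mathbb{C})$ is the subgroup of elements admitting an upper triangular lift in $\mathrm{SL}(3,\mathbb{C})$. A complex Kleinian group is a discrete subgroup of $\mathrm{PSL}(3,\mathbb{C})$ acting properly discontinuously on some nonempty open invariant subset of $\mathbb{CP}^2$. An element of $\mathrm{PSL}(3,\mathbb{C})$ is parabolic if it has a non-diagonalizable lift in $\mathrm{SL}(3,\mathbb{C})$ all of whose eigenvalues have modulus $1$. Torsion-free means the only element of finite order is the identity. *)

From HB Require Import structures.
From mathcomp Require Import all_boot all_order all_algebra.
From mathcomp Require Import all_classical all_reals all_analysis.
From mathcomp Require Import complex.
Set Implicit Arguments.
Unset Strict Implicit.
Unset Printing Implicit Defensive.
Import Order.TTheory GRing.Theory Num.Theory.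
Import numFieldTopology.Exports numFieldNormedType.Exports.
Local Open Scope ring_scope.
Local Open Scope classical_set_scope.

(* The usual (modulus) metric topology on C = R[i], as for any numFieldType. *)
HB.instance Definition _ (R : realType) := PseudoPointedMetric.copy R[i] (R[i])^o.

Section PSL3.
Variable R : realType.
Local Notation C := R[i].
Local Notation M3 := 'M[C]_3.
Local Notation V3 := 'cV[C]_3.

(* An element of PSL(3,C) = PGL(3,C) is represented by any of its invertible
   lifts; a subgroup of PSL(3,C) is represented by its full preimage in GL(3,C),
   i.e. a set of invertible matrices closed under nonzero scalars, products,
   inverses and containing 1. *)
Definition psubgroup (G : set M3) : Prop :=
  [/\ (forall A, G A -> A \in unitmx),
      (forall A c, G A -> c != 0 -> G (c *: A)),
      G 1%:M,
      (forall A B, G A -> G B -> G (A *m B)) &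
      (forall A, G A -> G (invmx A))].

Definition peq (A B : M3) : Prop := exists2 c : C, c != 0 & A = c *: B.

Definition sl_lifts (G : set M3) : set M3 := [set A | G A /\ \det A = 1].

(* G is a discrete subgroup of PSL(3,C): the preimage in SL(3,C) (a 3-fold
   covering) is a discrete subset of M_3(C). *)
Definition pdiscrete (G : set M3) : Prop :=
  forall A, sl_lifts G A -> \forall B \near A, sl_lifts G B -> B = A.

(* Subsets of CP^2 are represented by their cones in C^3 \ {0}. *)
Definition cone (S : set V3) : Prop :=
  ~ S 0 /\ forall v c, S v -> c != 0 -> S (c *: v).

Definition unit_sphere : set V3 := [set v | \sum_i `|v i 0| ^+ 2 = 1].

(* a cone S is compact in CP^2 iff its intersection with the unit sphere is compact *)
Definition pcompact (S : set V3) : Prop := cone S /\ compact (S `&` unit_sphere).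

Definition prop_discont (G : set M3) (Omega : set V3) : Prop :=
  forall K, pcompact K -> K `<=` Omega ->
    finite_set [set A | sl_lifts G A /\ exists2 v, K v & K (A *m v)].

Definition complex_kleinian (G : set M3) : Prop :=
  [/\ psubgroup G, pdiscrete G &
      exists Omega : set V3,
        [/\ cone Omega, open Omega, Omega !=set0,
            (forall A v, G A -> Omega v -> Omega (A *m v)) &
            prop_discont G Omega]].

Definition in_Uplus (G : set M3) : Prop :=
  forall A, G A -> exists c : C,
    \det (c *: A) = 1 /\ forall i j : 'I_3, (j < i)%N -> (c *: A) i j = 0.

Definition noncommutative (G : set M3) : Prop :=
  exists A B, [/\ G A, G B & ~ peq (A *m B) (B *m A)].

Definition torsion_free (G : set M3) : Prop :=
  forall A n, G A -> (0 < n)%N -> peq (A ^+ n) 1%:M -> peq A 1%:M.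

Definition parabolic (A : M3) : Prop :=
  exists c : C, [/\ \det (c *: A) = 1, ~ diagonalizable (c *: A) &
                    forall a : C, eigenvalue (c *: A) a -> `|a| = 1].

Definition pgen (S : set M3) : set M3 :=
  fun A => forall H, psubgroup H -> S `<=` H -> H A.

Definition parabolic_subgroup (G : set M3) : set M3 :=
  pgen [set A | G A /\ parabolic A].

Definition pconj (G H : set M3) : Prop :=
  exists2 P : M3, P \in unitmx & forall A, G A <-> H (P *m A *m invmx P).

Definition gxy (x y : C) : M3 :=
  1%:M + x *: delta_mx (0 : 'I_3) (1 : 'I_3) + y *: delta_mx (0 : 'I_3) (2 : 'I_3).

Definition discrete_subgroup_rank_le2 (W : set (C * C)) : Prop :=
  [/\ W (0, 0),
      (forall u v, W u -> W v -> W (u.1 - v.1, u.2 - v.2)),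
      (forall w, W w -> \forall u \near w, W u -> u = w) &
      (forall u v w, W u -> W v -> W w ->
         exists n1 n2 n3 : int, (n1, n2, n3) != (0, 0, 0) /\
           (u.1 *~ n1 + v.1 *~ n2 + w.1 *~ n3 = 0 /\
            u.2 *~ n1 + v.2 *~ n2 + w.2 *~ n3 = 0))].

Definition GammaW (W : set (C * C)) : set M3 :=
  fun A => exists x y c, [/\ W (x, y), c != 0 & A = c *: gxy x y].

Definition Gamma1 : set M3 := pgen [set A | A = gxy 1 0 \/ A = gxy 0 1].
Definition Gamma2 (y : C) : set M3 := pgen [set A | A = gxy 0 1 \/ A = gxy 0 y].
Definition Gamma3 (x : C) : set M3 := pgen [set A | A = gxy 1 0 \/ A = gxy x 0].
Definition Gamma4 : set M3 := pgen [set A | A = gxy 1 0].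
Definition Gamma5 : set M3 := pgen [set A | A = gxy 0 1].

End PSL3.

(* The commutator of two non-commuting elements of U_+ is a unipotent upper
   triangular matrix different from the identity, hence a parabolic element of
   Gamma_p; so W is not trivial.  A discrete subgroup of rank at most 2 of the
   real vector space C^2 is Z u or Z u + Z v with u, v linearly independent over
   R: the points of W on R u form a cyclic group, and so do the second
   coordinates of the points of W in the basis (u, w), the latter because a
   Dirichlet approximation would otherwise produce nonzero points of W
   arbitrarily close to 0.  Finally, conjugating by diag(1, M) acts on g_{x,y}
   through (x, y) |-> (x, y) M for M in GL(2, C), which sends Z u to Z (1, 0),
   and Z u + Z v to Z (1, 0) + Z (0, 1) if u, v are C-independent and to
   Z (1, 0) + Z (x, 0) with x not real otherwise. *)

From mathcomp Require Import all_boot all_order all_algebra.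
From mathcomp Require Import all_classical all_reals all_analysis.
From mathcomp Require Import complex.
From mathcomp Require Import ring lra.
Set Implicit Arguments.
Unset Strict Implicit.
Unset Printing Implicit Defensive.
Import Order.TTheory GRing.Theory Num.Theory.
Local Open Scope ring_scope.
Local Open Scope classical_set_scope.

(** * Discrete subgroups of rank at most two *)

Definition subgroup {V : zmodType} (W : set V) : Prop :=
  W 0 /\ forall u v, W u -> W v -> W (u - v).

Section Subgroup.
Variables (V : zmodType) (W : set V).
Hypothesis W_sub : subgroup W.

Lemma subgroupN u : W u -> W (- u).
Proof. by case: W_sub => W0 WB Wu; rewrite -sub0r; apply: WB. Qed.

Lemma subgroupD u v : W u -> W v -> W (u + v).
Proof. by case: W_sub => _ WB Wu Wv; rewrite -[v]opprK; apply/WB/subgroupN. Qed.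

Lemma subgroupMz u n : W u -> W (u *~ n).
Proof.
case: W_sub => W0 _ Wu.
have Wn k : W (u *+ k).
  by elim: k => [|k IHk]; [rewrite mulr0n | rewrite mulrS; apply: subgroupD].
by case: n => k; [apply: Wn | rewrite NegzE mulrNz; apply/subgroupN/Wn].
Qed.

End Subgroup.

Lemma cyclic_of_gap (R : realType) (S : set R) d : subgroup S -> 0 < d ->
    (forall s, S s -> 0 < s -> d <= s) -> (exists2 s, S s & s != 0) ->
  exists2 g, 0 < g & forall s, S s <-> exists n : int, s = g *~ n.
Proof.
move=> S_sub d_gt0 gap [s1 Ss1 s1_neq0]; have [S0 SB] := S_sub.
pose P := [set s | S s /\ 0 < s].
have P_ne0 : P !=set0.
  have [s1_gt0|s1_le0] := ltP 0 s1; first by exists s1.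
  by exists (- s1); split; [apply: subgroupN | rewrite oppr_gt0 lt_neqAle s1_neq0].
have P_lb : lbound P 0 by move=> s [_ /ltW].
have P_inf : has_inf P by split; last exists 0.
have Pinf_le s : P s -> inf P <= s by move=> Ps; apply: ge_inf => //; exists 0.
have [g [Sg g_gt0] g_lt] := inf_adherent d_gt0 P_inf.
have g_inf : g = inf P.
  apply/eqP; rewrite eq_le Pinf_le // andbT leNgt; apply/negP => lt_g.
  have [h [Sh h_gt0] hg] := inf_lt P_ne0 lt_g; have := gap _ (SB _ _ Sg Sh).
  by rewrite subr_gt0 => /(_ hg); have := Pinf_le h (conj Sh h_gt0); lra.
exists g => // s; split => [Ss|[n ->]]; last exact: subgroupMz.
exists (Num.floor (s / g)); rewrite -mulrzl.
have /andP [fl_le lt_fl] := floor_itv (s / g).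
set n := Num.floor (s / g) in fl_le lt_fl *.
rewrite ler_pdivlMr // in fl_le; rewrite ltr_pdivrMr // intrD mulrDl mul1r in lt_fl.
have Sr : S (s - n%:~R * g) by apply/SB; rewrite // mulrzl; apply: subgroupMz.
have [r_gt0|] := ltP 0 (s - n%:~R * g); last by lra.
by have := Pinf_le _ (conj Sr r_gt0); rewrite -g_inf; lra.
Qed.

Lemma dirichlet_approximation (R : archiRealFieldType) (a : R) (n : nat) :
  exists k : nat, exists m : int,
    (0 < k <= n.+1)%N /\ `|k%:R * a - m%:~R| < n.+1%:R^-1.
Proof.
pose frac (x : R) := x - (Num.floor x)%:~R.
have frac_itv x : 0 <= frac x < 1.
  by have := floor_itv x; rewrite /frac intrD => /andP [? ?]; apply/andP; split; lra.
pose box (i : 'I_n.+2) : 'I_n.+1 := inord (Num.trunc (frac (i%:R * a) * n.+1%:R)).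
have boxE i : box i = Num.trunc (frac (i%:R * a) * n.+1%:R) :> nat.
  have /andP [f_ge0 f_lt1] := frac_itv (i%:R * a).
  rewrite inordK // ltnS -ltnS truncn_lt_nat ?mulr_ge0 //.
  by rewrite -[X in _ < X]mul1r ltr_pM2r.
have : ~~ injectiveb box.
  by apply/injectiveP => /leq_card; rewrite !card_ord ltnn.
move=> /injectivePn [i [j ne_ij eq_box]].
wlog lt_ij : i j ne_ij eq_box / (i < j)%N.
  move=> hyp; case: (ltngtP i j) => [lt_ij|lt_ji|/val_inj eq_ij].
  - exact: (hyp i j).
  - by apply: (hyp j i); rewrite // eq_sym.
  - by rewrite eq_ij eqxx in ne_ij.
exists (j - i)%N, (Num.floor (j%:R * a) - Num.floor (i%:R * a)).
split; first by rewrite subn_gt0 lt_ij (leq_trans (leq_subr _ _)) // -ltnS.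
have Np : 0 < n.+1%:R :> R by [].
move: eq_box => /(congr1 (@nat_of_ord _)); rewrite !boxE.
have /andP [fi_ge0 fi_lt1] := frac_itv (i%:R * a).
have /andP [fj_ge0 fj_lt1] := frac_itv (j%:R * a).
have := trunc_itv (mulr_ge0 fi_ge0 (ltW Np)); have := trunc_itv (mulr_ge0 fj_ge0 (ltW Np)).
move=> /andP [lej ltj] /andP [lei lti] eq_tr; rewrite eq_tr in lei lti.
rewrite -[(Num.trunc _).+1%:R]natr1 in ltj lti.
rewrite natrB ?(ltnW lt_ij) // intrB mulrBl -/(frac _).
have -> : j%:R * a - i%:R * a - ((Num.floor (j%:R * a))%:~R - (Num.floor (i%:R * a))%:~R)
  = frac (j%:R * a) - frac (i%:R * a) by rewrite /frac; ring.
rewrite ltr_norml -[n.+1%:R^-1]mul1r ltrNl !ltr_pdivlMr //.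
by apply/andP; split; lra.
Qed.

Definition indep2 {R : pzRingType} {V : lmodType R} (u v : V) : Prop :=
  forall a b : R, a *: u + b *: v = 0 -> a = 0 /\ b = 0.

Definition zrank_le2 {V : zmodType} (W : set V) : Prop :=
  forall u v w, W u -> W v -> W w -> exists n1 n2 n3 : int,
    (n1, n2, n3) != (0, 0, 0) /\ u *~ n1 + v *~ n2 + w *~ n3 = 0.

Section Independence.
Variables (K : fieldType) (V : lmodType K).

Lemma indep2_neq0 (u v : V) : indep2 u v -> u != 0 /\ v != 0.
Proof.
move=> uv; split; apply/eqP => eq0.
  have := uv 1 0; rewrite eq0 scaler0 scale0r addr0 => /(_ erefl) [/eqP].
  by rewrite oner_eq0.
have := uv 0 1; rewrite eq0 scaler0 scale0r addr0 => /(_ erefl) [_ /eqP].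
by rewrite oner_eq0.
Qed.

Lemma indep2_notin_line (u w : V) : u != 0 -> ~ (exists t, w = t *: u) -> indep2 u w.
Proof.
move=> u_neq0 w_out a b eq0.
have b0 : b = 0.
  apply: contra_notP w_out => /eqP b_neq0; exists (- a / b).
  apply: (scalerI b_neq0); rewrite scalerA mulrCA divff // mulr1 scaleNr.
  by apply/eqP; rewrite -addr_eq0 addrC eq0.
split=> //; move: eq0; rewrite b0 scale0r addr0 => /eqP.
by rewrite scaler_eq0 (negPf u_neq0) orbF => /eqP.
Qed.

End Independence.

Definition primitive {R : pzRingType} {V : lmodType R} (W : set V) (u : V) : Prop :=
  forall t : R, W (t *: u) <-> exists n : int, t = n%:~R.

Section DiscreteSubgroup.
Variables (R : realType) (V : lmodType R) (N : V -> R).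
Hypothesis ler_ND : forall u v, N (u + v) <= N u + N v.
Hypothesis NZ : forall a u, N (a *: u) = `|a| * N u.
Hypothesis N_gt0 : forall u, u != 0 -> 0 < N u.

Lemma N_ge0 u : 0 <= N u.
Proof.
have [->|/N_gt0/ltW //] := eqVneq u 0.
by have := NZ 0 0; rewrite scale0r normr0 mul0r => ->.
Qed.

Lemma N_comb a b u v : N (a *: u + b *: v) <= `|a| * N u + `|b| * N v.
Proof. by rewrite -!NZ; apply: ler_ND. Qed.

Variables (W : set V) (e : R).
Hypotheses (W_sub : subgroup W) (e_gt0 : 0 < e).
Hypothesis W_sep : forall w, W w -> N w < e -> w = 0.

Lemma subgroup_line (v : V) : W v -> v != 0 -> exists2 u, u != 0 & primitive W u.
Proof.
move=> Wv v_neq0; have Nv_gt0 := N_gt0 v_neq0; have [W0 WB] := W_sub.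
pose S := [set t : R | W (t *: v)].
have S_sub : subgroup S.
  by split=> [|s t Ss St]; rewrite /S /= ?scale0r ?scalerBl; last exact: WB.
have gap s : S s -> 0 < s -> e / N v <= s.
  move=> Ss s_gt0; rewrite leNgt; apply/negP => small.
  have /(W_sep Ss)/eqP : N (s *: v) < e by rewrite NZ gtr0_norm // -ltr_pdivlMr.
  by rewrite scaler_eq0 (negPf v_neq0) orbF (gt_eqF s_gt0).
have [|g g_gt0 Sg] := cyclic_of_gap S_sub (divr_gt0 e_gt0 Nv_gt0) gap.
  by exists 1; rewrite /S /= ?scale1r ?oner_neq0.
exists (g *: v); first by rewrite scaler_eq0 negb_or gt_eqF.
move=> t; rewrite scalerA; split=> [/Sg [n tg]|[n ->]].
  by exists n; apply: (mulIf (lt0r_neq0 g_gt0)); rewrite tg mulrzl.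
by apply/Sg; exists n; rewrite mulrzl.
Qed.

Lemma zrank_le2_span (u w z : V) : zrank_le2 W -> indep2 u w -> W u -> W w -> W z ->
  exists a b, z = a *: u + b *: w.
Proof.
move=> W_rank uw Wu Ww Wz; have [n1 [n2 [n3 [n_neq0 eq0]]]] := W_rank _ _ _ Wu Ww Wz.
have n3_neq0 : n3%:~R != 0 :> R.
  rewrite intr_eq0; apply: contraNneq n_neq0 => n30.
  move: eq0; rewrite n30 mulr0z addr0 -[u *~ _]scaler_int -[w *~ _]scaler_int.
  move=> /uw [/eqP + /eqP].
  by rewrite !intr_eq0 => /eqP-> /eqP->.
exists (- (n3%:~R^-1 * n1%:~R)), (- (n3%:~R^-1 * n2%:~R)).
rewrite -[z](scalerK n3_neq0) scaler_int.
move/eqP: eq0; rewrite addrC addr_eq0 => /eqP ->.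
rewrite -[u *~ _]scaler_int -[w *~ _]scaler_int.
by rewrite scalerN scalerDr !scalerA opprD -!scaleNr.
Qed.


(* A point a u + b w of W with 0 < b < d would give, through a Dirichlet
   approximation k a ~ m, the nonzero point k (a u + b w) - m u of W of norm < e. *)
Lemma second_coefficient_gap (u w : V) : primitive W u -> indep2 u w ->
  exists2 d, 0 < d & forall a b, W (a *: u + b *: w) -> 0 < b -> d <= b.
Proof.
move=> Lu uw; have [u_neq0 w_neq0] := indep2_neq0 uw.
have Nw_gt0 := N_gt0 w_neq0; have Nu_ge0 := N_ge0 u.
pose n := Num.trunc (2 * N u / e).
have n_gt : 2 * N u / e < n.+1%:R.
  by have /andP [] := trunc_itv (divr_ge0 (mulr_ge0 (ler0n _ 2) Nu_ge0) (ltW e_gt0)).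
rewrite ltr_pdivrMr // in n_gt.
have n_gt0 : 0 < n.+1%:R :> R by [].
pose d := e / (2 * n.+1%:R * N w).
have d_gt0 : 0 < d by rewrite divr_gt0 // !mulr_gt0.
exists d => // a b Wab b_gt0; rewrite leNgt; apply/negP => b_lt.
have [k [m [/andP [k_gt0 k_le] approx]]] := dirichlet_approximation a n.
pose z := (k%:R * a - m%:~R) *: u + (k%:R * b) *: w.
have Wz : W z.
  have Wu : W u by rewrite -[u]scale1r; apply/Lu; exists 1.
  have := subgroupD W_sub (subgroupMz W_sub k Wab) (subgroupMz W_sub (- m) Wu).
  rewrite /z -[(_ + _) *~ _]scaler_int -[u *~ _]scaler_int scalerDr !scalerA.
  by rewrite scalerBl intrN scaleNr addrAC.
have k_gt0' : 0 < k%:R :> R by rewrite ltr0n.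
have k_le' : k%:R <= n.+1%:R :> R by rewrite ler_nat.
have small_u : `|k%:R * a - m%:~R| * N u < e / 2.
  apply: (le_lt_trans (ler_wpM2r Nu_ge0 (ltW approx))).
  by rewrite mulrC ltr_pdivrMr //; lra.
have small_w : `|k%:R * b| * N w < e / 2.
  have -> : e / 2 = n.+1%:R * d * N w.
    by rewrite /d; field; rewrite gt_eqF // addrC natr1 pnatr_eq0.
  rewrite gtr0_norm ?mulr_gt0 // ltr_pM2r //.
  by apply: (le_lt_trans (ler_wpM2r (ltW b_gt0) k_le')); rewrite ltr_pM2l.
have /(W_sep Wz) z0 : N z < e by apply: (le_lt_trans (N_comb _ _ _ _)); lra.
have [_ /eqP] := uw _ _ z0.
by rewrite mulf_eq0 (gt_eqF k_gt0') (gt_eqF b_gt0).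
Qed.

Lemma subgroup_plane (u w : V) : zrank_le2 W -> primitive W u -> indep2 u w -> W w ->
  exists2 v, indep2 u v & forall z, W z <-> exists n m : int, z = u *~ n + v *~ m.
Proof.
move=> W_rank Lu uw Ww; have [W0 WB] := W_sub.
have Wu : W u by rewrite -[u]scale1r; apply/Lu; exists 1.
pose S := [set b | exists a, W (a *: u + b *: w)].
have S_sub : subgroup S.
  split=> [|b b' [a Wa] [a' Wa']]; first by exists 0; rewrite !scale0r addr0.
  exists (a - a'); have := WB _ _ Wa Wa'.
  by rewrite !scalerBl opprD addrACA.
have [d d_gt0 gap] := second_coefficient_gap Lu uw.
have [|g g_gt0 Sg] := cyclic_of_gap S_sub d_gt0 (fun b '(ex_intro a Wab) => gap a b Wab).
  by exists 1; [exists 0; rewrite scale0r scale1r add0r | exact: oner_neq0].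
have [a0 Wv] : S g by apply/Sg; exists 1.
exists (a0 *: u + g *: w).
  move=> a b; rewrite scalerDr !scalerA addrA -scalerDl => /uw [+ /eqP].
  by rewrite mulf_eq0 (gt_eqF g_gt0) orbF => /[swap] /eqP ->; rewrite mul0r addr0.
move=> z; split=> [Wz|[n [m ->]]]; last first.
  exact: (subgroupD W_sub (subgroupMz W_sub n Wu) (subgroupMz W_sub m Wv)).
have [a [b zE]] := zrank_le2_span W_rank uw Wu Ww Wz.
have [m bE] : exists m : int, b = g *~ m by apply/Sg; exists a; rewrite -zE.
have /Lu [n nE] : W ((a - a0 *~ m) *: u).
  have := WB _ _ Wz (subgroupMz W_sub m Wv).
  by rewrite zE bE mulrzDl !scalerMzl scalerBl opprD addrACA subrr addr0.
exists n, m; rewrite zE bE mulrzDl !scalerMzl -[u *~ n]scaler_int -nE.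
by rewrite addrA scalerBl addrNK.
Qed.

Theorem discrete_zrank_le2_lattice (w : V) : zrank_le2 W -> W w -> w != 0 ->
  (exists2 u, u != 0 & forall z, W z <-> exists n : int, z = u *~ n) \/
  (exists u v, indep2 u v /\ forall z, W z <-> exists n m : int, z = u *~ n + v *~ m).
Proof.
move=> W_rank Ww w_neq0; have [u u_neq0 Lu] := subgroup_line Ww w_neq0.
have [inline|] := pselect (forall z, W z -> exists t, z = t *: u).
  left; exists u => // z; split=> [Wz|[n ->]].
    have [t zE] := inline z Wz; move: Wz; rewrite zE => /Lu [n ->].
    by exists n; rewrite scaler_int.
  by rewrite -[u *~ n]scaler_int; apply/Lu; exists n.
move=> /existsNP [v /not_implyP [Wv v_out]]; right; exists u.
have [v' uv' Wuv'] := subgroup_plane W_rank Lu (indep2_notin_line u_neq0 v_out) Wv.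
by exists v'.
Qed.

End DiscreteSubgroup.

Section ComplexPlane.
Variable R : realType.
Local Notation C := R[i].
(* C^2 as a real vector space: [Rcomplex R] is [R[i]] with its R-module
   structure and R-valued modulus, so a set of C * C is also a set of V. *)
Local Notation V := (Rcomplex R * Rcomplex R)%type.
Local Open Scope complex_scope.

Lemma Rcomplex_scaleE (a : R) (z : Rcomplex R) : a *: z = a%:C * z :> C.
Proof. by case: z => x y; rewrite /GRing.scale /=; simpc. Qed.

Lemma Rcomplex_normE (z : Rcomplex R) : `|z|%:C = `|z : C|.
Proof. by rewrite normc_def; case: z. Qed.

Lemma Rcomplex_normZ (a : R) (z : Rcomplex R) : `|a *: z| = `|a| * `|z|.
Proof.
have normC_real : `|a%:C| = `|a|%:C :> C by rewrite normc_def /= expr0n /= addr0 sqrtr_sqr.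
by apply: complexI; rewrite rmorphM /= !Rcomplex_normE Rcomplex_scaleE normrM normC_real.
Qed.

Definition l1norm (u : V) : R := `|u.1| + `|u.2|.

Lemma l1normD u v : l1norm (u + v) <= l1norm u + l1norm v.
Proof. by rewrite /l1norm; have := ler_normD u.1 v.1; have := ler_normD u.2 v.2; lra. Qed.

Lemma l1normZ a u : l1norm (a *: u) = `|a| * l1norm u.
Proof. by rewrite /l1norm !Rcomplex_normZ mulrDr. Qed.

Lemma l1norm_gt0 u : u != 0 -> 0 < l1norm u.
Proof.
case: u => x y; rewrite xpair_eqE negb_and /l1norm /= -!normr_gt0.
by have := normr_ge0 x; have := normr_ge0 y; move=> ? ? /orP [] ?; lra.
Qed.

Lemma discrete_subgroup_sep (W : set (C * C)) : discrete_subgroup_rank_le2 W ->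
  exists2 e : R, 0 < e & forall u : V, W u -> l1norm u < e -> u = 0.
Proof.
move=> [W0 _ W_discr _]; have /nbhs_ballP [eps eps_gt0 ball_sub] := W_discr _ W0.
have eps_real : eps = (complex.Re eps)%:C by rewrite RRe_real // gtr0_real.
have Reps_gt0 : 0 < complex.Re eps by rewrite -ltcR -eps_real.
exists (complex.Re eps) => // u Wu small; apply: ball_sub => //.
have := normr_ge0 u.1; have := normr_ge0 u.2; rewrite /l1norm in small => ? ?.
by split; rewrite /ball /= sub0r normrN -Rcomplex_normE eps_real ltcR; lra.
Qed.

Lemma discrete_subgroup_zrank (W : set (C * C)) : discrete_subgroup_rank_le2 W ->
  subgroup (W : set V) /\ zrank_le2 (W : set V).
Proof.
move=> [W0 WB _ W_rank]; split=> [|u v w Wu Wv Ww]; first by split.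
have [n1 [n2 [n3 [n_neq0 [eq1 eq2]]]]] := W_rank _ _ _ Wu Wv Ww.
exists n1, n2, n3; split => //.
by apply/eqP; rewrite xpair_eqE /= !raddfMz /= eq1 eq2 eqxx.
Qed.

End ComplexPlane.

(** * The groups Gamma_W up to conjugacy *)

Lemma invmxM (R : comUnitRingType) n (A B : 'M[R]_n) :
  A \in unitmx -> B \in unitmx -> invmx (A *m B) = invmx B *m invmx A.
Proof.
move=> A_unit B_unit; have AB_unit : A *m B \in unitmx by rewrite unitmx_mul A_unit.
rewrite -[LHS]mulmx1; apply: canLR (mulKmx AB_unit) _.
by rewrite mulmxA -(mulmxA A) mulmxV // mulmx1 mulmxV.
Qed.

Lemma pconj_trans (R : realType) (G H K : set 'M[R[i]]_3) :
  pconj G H -> pconj H K -> pconj G K.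
Proof.
move=> [P P_unit GH] [Q Q_unit HK]; exists (Q *m P); first by rewrite unitmx_mul Q_unit.
by move=> A; rewrite GH HK invmxM // !mulmxA.
Qed.

Lemma pconj_ext (R : realType) (G H K : set 'M[R[i]]_3) :
  pconj G H -> (forall A, H A <-> K A) -> pconj G K.
Proof. by move=> [P P_unit GH] HK; exists P => // A; rewrite GH HK. Qed.

Section GammaW.
Variable R : realType.
Local Notation C := R[i].
Local Notation M3 := 'M[C]_3.

Definition mx3 (a b c d e f g h k : C) : M3 :=
  \matrix_(i, j) nth 0 (nth [::] [:: [:: a; b; c]; [:: d; e; f]; [:: g; h; k]] i) j.

Lemma mx3M a b c d e f g h k a' b' c' d' e' f' g' h' k' :
  mx3 a b c d e f g h k *m mx3 a' b' c' d' e' f' g' h' k' =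
  mx3 (a * a' + b * d' + c * g') (a * b' + b * e' + c * h') (a * c' + b * f' + c * k')
      (d * a' + e * d' + f * g') (d * b' + e * e' + f * h') (d * c' + e * f' + f * k')
      (g * a' + h * d' + k * g') (g * b' + h * e' + k * h') (g * c' + h * f' + k * k').
Proof.
apply/matrixP => i j; rewrite !mxE !big_ord_recl big_ord0 !mxE /=.
by case: i => [[|[|[|?]]] ?] //; case: j => [[|[|[|?]]] ?] //=; ring.
Qed.

Lemma mx3_1 : 1%:M = mx3 1 0 0 0 1 0 0 0 1.
Proof.
by apply/matrixP => i j; rewrite !mxE; case: i => [[|[|[|?]]] ?] //; case: j => [[|[|[|?]]] ?].
Qed.

Lemma gxyE (x y : C) : gxy x y = mx3 1 x y 0 1 0 0 0 1.
Proof.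
apply/matrixP => i j; rewrite /gxy !mxE.
by case: i => [[|[|[|?]]] ?] //; case: j => [[|[|[|?]]] ?] //=; ring.
Qed.

Lemma gxyM (x y x' y' : C) : gxy x y *m gxy x' y' = gxy (x + x') (y + y').
Proof. by rewrite !gxyE mx3M; congr mx3; ring. Qed.

Lemma gxy0 : gxy 0 0 = 1%:M :> M3.
Proof. by rewrite gxyE mx3_1. Qed.

Lemma gxyK (x y : C) : gxy x y *m gxy (- x) (- y) = 1%:M.
Proof. by rewrite gxyM !subrr gxy0. Qed.

Lemma gxy_unit (x y : C) : gxy x y \in unitmx.
Proof. by have [] := mulmx1_unit (gxyK x y). Qed.

Lemma gxyV (x y : C) : invmx (gxy x y) = gxy (- x) (- y).
Proof. by rewrite -[RHS](mulKmx (gxy_unit x y)) gxyK mulmx1. Qed.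

Lemma psubgroup_GammaW (W : set (C * C)) : subgroup W -> psubgroup (GammaW W).
Proof.
move=> W_sub; have [W0 WB] := W_sub; split.
- by move=> _ [x [y [c [_ c_neq0 ->]]]]; rewrite unitmxZ ?unitfE ?gxy_unit.
- move=> _ d [x [y [c [Wxy c_neq0 ->]]]] d_neq0.
  by exists x, y, (d * c); rewrite scalerA mulf_neq0.
- by exists 0, 0, 1; rewrite scale1r gxy0 oner_neq0.
- move=> _ _ [x [y [c [Wxy c_neq0 ->]]]] [x' [y' [c' [Wxy' c'_neq0 ->]]]].
  exists (x + x'), (y + y'), (c * c'); split; last by rewrite -scalemxAl -scalemxAr scalerA gxyM.
    exact: (subgroupD W_sub Wxy Wxy').
  by rewrite mulf_neq0.
- move=> _ [x [y [c [Wxy c_neq0 ->]]]]; exists (- x), (- y), c^-1; split.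
  + exact: (subgroupN W_sub Wxy).
  + by rewrite invr_eq0.
  + by rewrite invmxZ ?gxyV // unitmxZ ?unitfE ?gxy_unit.
Qed.

Definition span2 (a b : C * C) : set (C * C) :=
  [set z | exists n m : int, z = a *~ n + b *~ m].

Lemma subgroup_span2 a b : subgroup (span2 a b).
Proof.
split=> [|_ _ [n [m ->]] [n' [m' ->]]]; first by exists 0, 0; rewrite !mulr0z addr0.
by exists (n - n'), (m - m'); rewrite !mulrzBr opprD addrACA.
Qed.

Lemma psubgroup_gxyMz (H : set M3) (x y : C) : psubgroup H -> H (gxy x y) ->
  forall n : int, H (gxy (x *~ n) (y *~ n)).
Proof.
move=> [_ _ H1 HM HV] Hg.
have Hn k : H (gxy (x *+ k) (y *+ k)).
  by elim: k => [|k IHk]; rewrite ?mulr0n ?gxy0 // !mulrS -gxyM; apply: HM.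
by case=> k; rewrite ?NegzE ?mulrNz -?gxyV; [apply: Hn | apply/HV/Hn].
Qed.

Lemma pgen_gxy2 (a b : C * C) A :
  pgen [set B | B = gxy a.1 a.2 \/ B = gxy b.1 b.2] A <-> GammaW (span2 a b) A.
Proof.
split=> [gen_A|[x [y [c [[n [m [-> ->]]] c_neq0 ->]]]] H H_sub gens].
  apply: gen_A; first exact/psubgroup_GammaW/subgroup_span2.
  move=> _ [->|->]; [exists a.1, a.2, 1 | exists b.1, b.2, 1].
  - split; rewrite ?scale1r ?oner_neq0 //.
    by exists 1, 0; rewrite mulr1z mulr0z addr0; case: a.
  - split; rewrite ?scale1r ?oner_neq0 //.
    by exists 0, 1; rewrite mulr1z mulr0z add0r; case: b.
have [_ HZ _ HM _] := H_sub; apply: HZ => //; rewrite /= !raddfMz -gxyM.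
by apply: HM; apply: psubgroup_gxyMz => //; apply: gens; [left | right].
Qed.

Definition lin2 (p q r s : C) (z : C * C) : C * C :=
  (z.1 * p + z.2 * r, z.1 * q + z.2 * s).

Lemma lin2_span2 p q r s a b z :
  span2 (lin2 p q r s a) (lin2 p q r s b) z <->
  exists2 z', span2 a b z' & z = lin2 p q r s z'.
Proof.
split=> [[n [m ->]]|[_ [n [m ->]] ->]].
  exists (a *~ n + b *~ m); first by exists n, m.
  by rewrite /lin2 /=; congr pair; rewrite !raddfMz /=; ring.
by exists n, m; rewrite /lin2 /=; congr pair; rewrite !raddfMz /=; ring.
Qed.

Definition blockmx (p q r s : C) : M3 := mx3 1 0 0 0 p q 0 r s.

Lemma blockmx_unit p q r s : p * s - q * r != 0 -> blockmx p q r s \in unitmx.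
Proof.
move=> det_neq0; pose D := p * s - q * r.
suff /mulmx1_unit [] : blockmx p q r s *m blockmx (s / D) (- q / D) (- r / D) (p / D) = 1%:M.
  by [].
by rewrite /blockmx mx3M mx3_1 /D; congr mx3; field.
Qed.

Lemma blockmx_gxy p q r s z :
  blockmx p q r s *m gxy (lin2 p q r s z).1 (lin2 p q r s z).2 =
  gxy z.1 z.2 *m blockmx p q r s.
Proof. by rewrite /blockmx /lin2 !gxyE !mx3M /=; congr mx3; ring. Qed.

Lemma pconj_GammaW_lin2 p q r s (W W' : set (C * C)) : p * s - q * r != 0 ->
  (forall z, W z <-> exists2 z', W' z' & z = lin2 p q r s z') ->
  pconj (GammaW W) (GammaW W').
Proof.
move=> det_neq0 WW'; set Q := blockmx p q r s.
have Q_unit : Q \in unitmx by apply: blockmx_unit.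
exists Q => // A; split=> [[x [y [c [/WW' [[x' y'] W'z' [-> ->]] c_neq0 ->]]]]|].
  exists x', y', c; split=> //.
  by rewrite -scalemxAr -scalemxAl (blockmx_gxy p q r s (x', y')) mulmxK.
move=> [x [y [c [W'xy c_neq0 QAQ]]]].
have : invmx Q *m (Q *m A *m invmx Q) *m Q = A by rewrite !mulmxA mulVmx // mul1mx mulmxKV.
rewrite QAQ -scalemxAr -scalemxAl -mulmxA -(blockmx_gxy p q r s (x, y)) mulKmx // => <-.
exists (lin2 p q r s (x, y)).1, (lin2 p q r s (x, y)).2, c.
by split=> //; apply/WW'; exists (x, y).
Qed.

End GammaW.

Section Classification.
Variable R : realType.
Local Notation C := R[i].
Local Notation V := (Rcomplex R * Rcomplex R)%type.

Lemma discrete_C2_lattice (W : set (C * C)) w : discrete_subgroup_rank_le2 W ->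
    W w -> w != 0 ->
  (exists2 u, u != 0 & forall z, W z <-> span2 u u z) \/
  (exists u v, indep2 (u : V) v /\ forall z, W z <-> span2 u v z).
Proof.
move=> W_discr Ww w_neq0; have [e e_gt0 W_sep] := discrete_subgroup_sep W_discr.
have [W_sub W_rank] := discrete_subgroup_zrank W_discr.
have [[u u_neq0 Wu]|[u [v [uv Wuv]]]] := discrete_zrank_le2_lattice
  (@l1normD R) (@l1normZ R) (@l1norm_gt0 R) W_sub e_gt0 W_sep W_rank Ww w_neq0.
  left; exists u => // z; rewrite Wu; split=> [[n ->]|[n [m ->]]].
    by exists n, 0; rewrite mulr0z addr0.
  by exists (n + m); rewrite mulrzDr.
by right; exists u, v.
Qed.

Lemma pgen_gxy1 (a : C * C) A :
  pgen [set B | B = gxy a.1 a.2] A <-> GammaW (span2 a a) A.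
Proof.
rewrite -pgen_gxy2.
suff -> : [set B | B = gxy a.1 a.2 \/ B = gxy a.1 a.2] = [set B | B = gxy a.1 a.2] by [].
by apply/seteqP; split=> B /=; [case | left].
Qed.

Lemma pconj_GammaW_span2 p q r s a b (W : set (C * C)) : p * s - q * r != 0 ->
    (forall z, W z <-> span2 (lin2 p q r s a) (lin2 p q r s b) z) ->
  pconj (GammaW W) (GammaW (span2 a b)).
Proof.
by move=> det_neq0 WE; apply: pconj_GammaW_lin2 det_neq0 _ => z; rewrite WE lin2_span2.
Qed.

Lemma exists_complement (u : C * C) : u != 0 -> exists r s, u.1 * s - u.2 * r != 0.
Proof.
case: u => x y; rewrite xpair_eqE negb_and /= => /orP [x_neq0|y_neq0].
  by exists 0, 1; rewrite mulr1 mulr0 subr0.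
by exists 1, 0; rewrite mulr0 mulr1 sub0r oppr_eq0.
Qed.

Lemma pconj_Gamma4 (W : set (C * C)) u : u != 0 ->
  (forall z, W z <-> span2 u u z) -> pconj (GammaW W) (@Gamma4 R).
Proof.
move=> u_neq0 WE; have [r [s det_neq0]] := exists_complement u_neq0.
apply: pconj_ext (pconj_GammaW_span2 (a := (1, 0)) (b := (1, 0)) det_neq0 _) _ => [z|A].
  by rewrite WE /lin2 /= !mul1r !mul0r !addr0 -surjective_pairing.
by rewrite /Gamma4 (pgen_gxy1 (1, 0)).
Qed.

Lemma pconj_Gamma1 (W : set (C * C)) u v : u.1 * v.2 - u.2 * v.1 != 0 ->
  (forall z, W z <-> span2 u v z) -> pconj (GammaW W) (@Gamma1 R).
Proof.
move=> det_neq0 WE.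
apply: pconj_ext (pconj_GammaW_span2 (a := (1, 0)) (b := (0, 1)) det_neq0 _) _ => [z|A].
  by rewrite WE /lin2 /= !mul1r !mul0r !addr0 !add0r -!surjective_pairing.
by rewrite /Gamma1 (pgen_gxy2 (1, 0) (0, 1)).
Qed.

Lemma pconj_Gamma3 (W : set (C * C)) u x : u != 0 ->
  (forall z, W z <-> span2 u (x *: u) z) -> pconj (GammaW W) (Gamma3 x).
Proof.
move=> u_neq0 WE; have [r [s det_neq0]] := exists_complement u_neq0.
apply: pconj_ext (pconj_GammaW_span2 (a := (1, 0)) (b := (x, 0)) det_neq0 _) _ => [z|A].
  by rewrite WE /lin2 /= !mul1r !mul0r !addr0 -surjective_pairing.
by rewrite /Gamma3 (pgen_gxy2 (1, 0) (x, 0)).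
Qed.

Lemma collinear2 (u v : C * C) : u != 0 -> u.1 * v.2 - u.2 * v.1 = 0 ->
  exists x, v = x *: u.
Proof.
have scaleE x (z : C * C) : x *: z = (x * z.1, x * z.2) by [].
case: u v => [a b] [c d]; rewrite xpair_eqE negb_and /= => ab_neq0 det0.
have [a0|a_neq0] := eqVneq a 0.
  move: ab_neq0 det0; rewrite a0 eqxx mul0r sub0r /= => b_neq0 /eqP.
  rewrite oppr_eq0 mulf_eq0 (negPf b_neq0) /= => /eqP ->.
  by exists (d / b); rewrite scaleE /= mulr0 divfK.
exists (c / a); rewrite scaleE /= divfK //; congr pair.
apply: (mulfI a_neq0); transitivity (b * c); first by apply/eqP; rewrite -subr_eq0 det0.
by field.
Qed.

Lemma pconj_indep2 (W : set (C * C)) u v : indep2 (u : V) v ->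
    (forall z, W z <-> span2 u v z) ->
  pconj (GammaW W) (@Gamma1 R) \/
  exists2 x, x \notin Num.real & pconj (GammaW W) (Gamma3 x).
Proof.
move=> uv WE; have [u_neq0 _] := indep2_neq0 uv.
have [det0|det_neq0] := eqVneq (u.1 * v.2 - u.2 * v.1) 0; last first.
  by left; apply: pconj_Gamma1 det_neq0 WE.
have [x vE] := collinear2 u_neq0 det0; right; exists x; last first.
  by apply: pconj_Gamma3 u_neq0 _ => z; rewrite WE vE.
apply/negP => /complex_realP [t xE].
have tuE : t *: (u : V) = v by rewrite vE xE; congr pair; apply: Rcomplex_scaleE.
have := uv t (-1); rewrite scaleN1r tuE subrr => /(_ erefl) [_ /eqP].
by rewrite oppr_eq0 oner_eq0.
Qed.

End Classification.

(** * Parabolic commutators in U_+ *)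

(* [is_trig_mx] means lower triangular, so upper triangular is [is_trig_mx A^T]. *)
Section TriangularMatrices.
Variables (R : comNzRingType) (n : nat).
Implicit Types A B : 'M[R]_n.

Lemma is_trig_mxM A B : is_trig_mx A -> is_trig_mx B -> is_trig_mx (A *m B).
Proof.
move=> /is_trig_mxP A_trig /is_trig_mxP B_trig; apply/is_trig_mxP => i j lt_ij.
rewrite mxE big1 // => k _; have [lt_ik|le_ki] := ltnP i k; first by rewrite A_trig ?mul0r.
by rewrite B_trig ?mulr0 // (leq_ltn_trans le_ki lt_ij).
Qed.

Lemma mulmx_trig_diag A B i : is_trig_mx A -> is_trig_mx B -> (A *m B) i i = A i i * B i i.
Proof.
move=> /is_trig_mxP A_trig /is_trig_mxP B_trig; rewrite mxE (bigD1 i) //= big1 ?addr0 //.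
move=> k k_neq_i; case: (ltngtP i k) => [lt_ik|lt_ki|/val_inj eq_ik].
- by rewrite A_trig ?mul0r.
- by rewrite B_trig ?mulr0.
- by rewrite eq_ik eqxx in k_neq_i.
Qed.

Lemma upper_trigM A B : is_trig_mx A^T -> is_trig_mx B^T ->
  is_trig_mx (A *m B)^T /\ forall i, (A *m B) i i = A i i * B i i.
Proof.
move=> AT_trig BT_trig; rewrite trmx_mul; split=> [|i]; first exact: is_trig_mxM.
by have := mulmx_trig_diag i BT_trig AT_trig; rewrite -trmx_mul !mxE mulrC.
Qed.

Lemma upper_trigZ (a : R) A : is_trig_mx A^T -> is_trig_mx (a *: A)^T.
Proof.
move=> /is_trig_mxP AT_trig; apply/is_trig_mxP => i j lt_ij.
by have := AT_trig i j lt_ij; rewrite !mxE => ->; rewrite mulr0.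
Qed.

Lemma char_poly_trmx A : char_poly A^T = char_poly A.
Proof. by rewrite /char_poly -det_tr /char_poly_mx raddfB /= tr_scalar_mx map_trmx trmxK. Qed.

End TriangularMatrices.

Lemma eigenvalue_upper_trig (F : fieldType) n (A : 'M[F]_n) a :
  is_trig_mx A^T -> eigenvalue A a -> exists i, a = A i i.
Proof.
move=> AT_trig; rewrite eigenvalue_root_char -char_poly_trmx char_poly_trig //.
rewrite -(big_map _ predT (fun x => 'X - x%:P)) root_prod_XsubC.
by move=> /mapP [i _ ->]; exists i; rewrite mxE.
Qed.

Lemma diagonalizable_eigenvalue1 (F : fieldType) n (A : 'M[F]_n) :
  diagonalizable A -> (forall a, eigenvalue A a -> a = 1) -> A = 1%:M.
Proof.
move=> /diagonalizablePeigen [rs _ rsE] eig1.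
suff /eigenspaceP : (1%:M <= eigenspace A 1)%MS by rewrite mul1mx scale1r.
rewrite -rsE (big_nth 0) big_mkord; apply/sumsmx_subP => i _.
have [/eig1 -> //|] := boolP (eigenvalue A rs`_i).
by rewrite negbK => /eqP ->; rewrite sub0mx.
Qed.

Section Parabolic.
Variable R : realType.
Local Notation C := R[i].
Local Notation M3 := 'M[C]_3.

Lemma unitriangular_parabolic (U : M3) : is_trig_mx U^T -> (forall i, U i i = 1) ->
  U != 1%:M -> parabolic U.
Proof.
move=> UT_trig U_diag U_neq1; exists 1; rewrite scale1r.
have eig1 a : eigenvalue U a -> a = 1 by move=> /(eigenvalue_upper_trig UT_trig) [i ->].
split.
- by rewrite -det_tr det_trig // big1 // => i _; rewrite mxE.
- by move=> /diagonalizable_eigenvalue1 /(_ eig1) /eqP; rewrite (negPf U_neq1).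
- by move=> a /eig1 ->; rewrite normr1.
Qed.

Lemma in_Uplus_lift (G : set M3) A : in_Uplus G -> G A ->
  exists2 c, c != 0 & is_trig_mx (c *: A)^T.
Proof.
move=> GU GA; have [c [det1 lower0]] := GU A GA; exists c.
  by apply: contra_eq_neq det1 => ->; rewrite scale0r det0 eq_sym oner_eq0.
by apply/is_trig_mxP => i j lt_ij; rewrite mxE lower0.
Qed.

Lemma upper_lift_inv_diag (c c' : C) (A : M3) i : A \in unitmx ->
    is_trig_mx (c *: A)^T -> is_trig_mx (c' *: invmx A)^T ->
  (c *: A) i i * (c' *: invmx A) i i = c * c'.
Proof.
move=> A_unit AT_trig AVT_trig; have [_ <-] := upper_trigM AT_trig AVT_trig.
by rewrite -scalemxAl -scalemxAr mulmxV // scalerA !mxE eqxx mulr1.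
Qed.

Lemma Uplus_commutator (G : set M3) A B : psubgroup G -> in_Uplus G -> G A -> G B ->
  let U := A *m B *m invmx A *m invmx B in is_trig_mx U^T /\ forall i, U i i = 1.
Proof.
move=> [G_unit _ _ _ GV] GU GA GB U.
have [a a_neq0 Ta] := in_Uplus_lift GU GA; have [b b_neq0 Tb] := in_Uplus_lift GU GB.
have [a' a'_neq0 Ta'] := in_Uplus_lift GU (GV _ GA).
have [b' b'_neq0 Tb'] := in_Uplus_lift GU (GV _ GB).
set K := a *: A *m (b *: B) *m (a' *: invmx A) *m (b' *: invmx B).
have [KT_trig K_diag] : is_trig_mx K^T /\ forall i, K i i = a * a' * (b * b').
  have [T1 D1] := upper_trigM Ta Tb; have [T2 D2] := upper_trigM T1 Ta'.
  have [T3 D3] := upper_trigM T2 Tb'; split=> // i.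
  have := upper_lift_inv_diag i (G_unit _ GA) Ta Ta'.
  have := upper_lift_inv_diag i (G_unit _ GB) Tb Tb'.
  by rewrite D3 D2 D1 => <- <-; ring.
have scalemxM x y (M N : M3) : (x *: M) *m (y *: N) = (x * y) *: (M *m N).
  by rewrite -scalemxAl -scalemxAr scalerA.
have k_neq0 : a * a' * (b * b') != 0 by rewrite !mulf_neq0.
have UE : U = (a * a' * (b * b'))^-1 *: K.
  rewrite /K !scalemxM [a * b * a' * b'](_ : _ = a * a' * (b * b')); last by ring.
  by rewrite scalerA mulVf ?scale1r.
split=> [|i]; first by rewrite UE upper_trigZ.
by rewrite UE mxE K_diag mulVf.
Qed.

Lemma parabolic_subgroup_nonscalar (G : set M3) : psubgroup G -> in_Uplus G ->
  noncommutative G -> exists2 U, parabolic_subgroup G U & forall k, U != k%:M.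
Proof.
move=> G_sub GU [A [B [GA GB AB_BA]]]; have [G_unit _ _ GM GV] := G_sub.
have [UT_trig U_diag] := Uplus_commutator G_sub GU GA GB.
set U := A *m B *m invmx A *m invmx B in UT_trig U_diag *.
have GU_ : G U by apply/GM/GV/GB/GM/GV/GA/GM.
have U_nonscalar k : U != k%:M.
  apply/eqP => Uk; apply: AB_BA; exists k.
    apply: contraTneq (G_unit _ GU_) => k0; rewrite Uk k0 -scalemx1 scale0r.
    by rewrite unitmxE det0 unitr0.
  rewrite -mul_scalar_mx -Uk /U !mulmxA mulmxKV ?G_unit //.
  by rewrite mulmxKV ?G_unit.
exists U => // H _ H_gens; apply: H_gens; split => //.
exact: unitriangular_parabolic UT_trig U_diag (U_nonscalar 1).
Qed.

Lemma pconj_GammaW_nonscalar (H : set M3) (W : set (C * C)) U :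
  pconj H (GammaW W) -> H U -> (forall k, U != k%:M) -> exists2 w, W w & w != 0.
Proof.
move=> [P P_unit HW] HU U_nonscalar; have [x [y [c [Wxy c_neq0 PUP]]]] := (HW U).1 HU.
exists (x, y) => //; apply/eqP => -[x0 y0]; move/eqP: (U_nonscalar c); apply.
have -> : U = invmx P *m (P *m U *m invmx P) *m P.
  by rewrite !mulmxA mulVmx // mul1mx mulmxKV.
by rewrite PUP x0 y0 gxy0 -scalemxAr -scalemxAl mulmx1 mulVmx // scalemx1.
Qed.

End Parabolic.

Theorem mainTheorem5 (R : realType) (G : set 'M[R[i]]_3) :
  complex_kleinian G -> in_Uplus G -> noncommutative G -> torsion_free G ->
  (exists W : set (R[i] * R[i]),
     discrete_subgroup_rank_le2 W /\ pconj (parabolic_subgroup G) (GammaW W)) ->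
  pconj (parabolic_subgroup G) (@Gamma1 R) \/
      (exists2 y : R[i], y \notin Num.real & pconj (parabolic_subgroup G) (Gamma2 y)) \/
      (exists2 x : R[i], x \notin Num.real & pconj (parabolic_subgroup G) (Gamma3 x)) \/
      pconj (parabolic_subgroup G) (@Gamma4 R) \/
      pconj (parabolic_subgroup G) (@Gamma5 R).
Proof.
move=> [G_sub _ _] GU G_nc _ [W [W_discr GpW]].
have [U GpU U_nonscalar] := parabolic_subgroup_nonscalar G_sub GU G_nc.
have [w Ww w_neq0] := pconj_GammaW_nonscalar GpW GpU U_nonscalar.
have [[u u_neq0 WE]|[u [v [uv WE]]]] := discrete_C2_lattice W_discr Ww w_neq0.
  by do 3 right; left; apply: pconj_trans GpW (pconj_Gamma4 u_neq0 WE).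
have [Gamma1_conj|[x x_nreal Gamma3_conj]] := pconj_indep2 uv WE.
  by left; apply: pconj_trans GpW Gamma1_conj.
by do 2 right; left; exists x => //; apply: pconj_trans GpW Gamma3_conj.
Qed.
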